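(* Let $k\ge2$ and $a_1,\dots,a_k\ge1$ be integers. Then $$\iota(\mathsf{K}_{a_1,\dots,a_k})=\begin{cases}1+\left(\sum_{i=1}^k\frac{a_i}{a_i-2}\right)^{-1}, & \text{if no } a_i=2,\\ 1, & \text{if some } a_i=2,\end{cases}$$ where $\iota(\mathsf{K}_{a_1,\dots,a_k})=\infty$ when no $a_i=2$ and $\sum_{i=1}^k\frac{a_i}{a_i-2}=0$. In particular, for $k\ge5$, $\iota(\mathsf{K}_{1,1,k})=-\frac{2}{k-4}$.
   Context: For a connected graph $G$ on vertices $v_1,\dots,v_n$, its distance matrix is $D=(d(v_i,v_j))_{i,j=1}^n$, where $d$ is the shortest-path distance; $\vec 1$ denotes the all-ones vector. $G$ is distance exceptional if $D\vec x=\vec 1$ has no solution. A curvature potential is a vector $\vec x$ with $D\vec x=\vec 1$. Curvature index $\iota(G)\in\mathbb{R}\cup\{\infty\}$: if $G$ is distance exceptional or has a curvature potential $\vec x$ with $\vec 1^\top\vec x\neq0$, then $\iota(G)$ is the unique real number with $\{D\vec x:\vec 1^\top\vec x=1\}\cap\mathbb{R}\vec 1=\{\iota(G)\vec 1\}$; otherwise $\iota(G)=\infty$. $\mathsf{K}_{a_1,\dots,a_k}$ is the complete multipartite graph with parts of sizes $a_1,\dots,a_k$. *)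

From HB Require Import structures.
From mathcomp Require Import all_boot all_order all_algebra.
Set Implicit Arguments. Unset Strict Implicit. Unset Printing Implicit Defensive.
Import Order.TTheory GRing.Theory Num.Theory.
Local Open Scope ring_scope.

Section Graph.
Variables (T : finType) (e : rel T).

Fixpoint walk (n : nat) (x y : T) : bool :=
  if n is n'.+1 then [exists z, e x z && walk n' z y] else x == y.

(* In a connected graph this least n is < #|T|, so searching in
   [0, #|T|) finds it. (For disconnected pairs the value is junk #|T|.) *)
Definition gdist (x y : T) : nat :=
  find (fun n => walk n x y) (iota 0 #|T|).

Definition connected_graph : Prop := forall x y : T, exists n, walk n x y.

(* distance matrix, vertices labelled v_1..v_n via enum_val *)
Definition distmx (R : nzRingType) : 'M[R]_#|T| :=
  \matrix_(i, j) (gdist (enum_val i) (enum_val j))%:R.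
End Graph.

Definition Kmp_vertex (k : nat) (a : 'I_k -> nat) : finType :=
  {i : 'I_k & 'I_(a i)}.

Definition Kmp_rel (k : nat) (a : 'I_k -> nat) : rel (Kmp_vertex a) :=
  fun u v => tag u != tag v.

Section Curvature.
Variable R : realFieldType.

Definition distance_exceptional (n : nat) (D : 'M[R]_n) : Prop :=
  ~ exists x : 'cV[R]_n, D *m x = const_mx 1.

(* curvature_index D c : "iota(G) = c", where c = None encodes infinity. *)
Definition curvature_index (n : nat) (D : 'M[R]_n) (c : option R) : Prop :=
  let cond := distance_exceptional D \/
              exists x : 'cV[R]_n, D *m x = const_mx 1 /\ \sum_i x i 0 != 0 in
  match c with
  | Some r => cond /\
      (exists x : 'cV[R]_n, \sum_i x i 0 = 1 /\ D *m x = const_mx r) /\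
      (forall (x : 'cV[R]_n) (s : R),
          \sum_i x i 0 = 1 -> D *m x = const_mx s -> s = r)
  | None => ~ cond
  end.
End Curvature.

Arguments Kmp_rel {k} a.
Arguments distmx {T} e R.

(* The distance matrix of K_{a_1,...,a_k} is J + B - 2I, with B the block
   diagonal all-ones matrix of the parts.  On a vector constant equal to y_i
   on part i it therefore acts by (D z)_u = sum_i a_i y_i + (a_p - 2) y_p,
   p the part of u.  Taking y_i = c / (a_i - 2) (or, when some a_{i0} = 2,
   y supported on part i0) makes D z constant, which produces the curvature
   potentials.  Uniqueness of the curvature index comes from the symmetry of
   D: if D z = r 1 and D x = c 1 then r (1^T x) = x^T D z = z^T D x = c (1^T z). *)

From HB Require Import structures.
From mathcomp Require Import all_boot all_order all_algebra ring.
Import Order.TTheory GRing.Theory Num.Theory.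
Local Open Scope ring_scope.
Set Implicit Arguments. Unset Strict Implicit.

Lemma find_iota0 (P : pred nat) n N :
  P n -> (forall m, (m < n)%N -> ~~ P m) -> (n < N)%N -> find P (iota 0 N) = n.
Proof.
move=> Pn Pm ltnN.
have hasP_N : has P (iota 0 N) by apply/hasP; exists n; rewrite ?mem_iota.
have := hasP_N; rewrite has_find size_iota => ltfN.
have := nth_find 0 hasP_N; rewrite nth_iota // add0n => Pf.
case: (ltngtP (find P (iota 0 N)) n) => // lt_f.
  by have := Pm _ lt_f; rewrite Pf.
by have := before_find 0 lt_f; rewrite nth_iota // add0n Pn.
Qed.

Section GraphDistance.
Variables (T : finType) (e : rel T).

Lemma walk1E (x y : T) : walk e 1 x y = e x y.
Proof.
apply/existsP/idP => [[z /andP[exz /eqP <-]] //|exy].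
by exists y; rewrite exy eqxx.
Qed.

Lemma gdist_shortest (n : nat) (x y : T) :
  walk e n x y -> (forall m, (m < n)%N -> ~~ walk e m x y) -> (n < #|T|)%N ->
  gdist e x y = n.
Proof. exact: find_iota0. Qed.

End GraphDistance.

Lemma size_uniq_leq_card (T : finType) (s : seq T) : uniq s -> (size s <= #|T|)%N.
Proof. by move=> us; rewrite -(card_uniqP us); apply: max_card. Qed.

Section SymmetricCurvature.
Variables (R : realFieldType) (n : nat) (D : 'M[R]_n).
Hypothesis D_sym : forall i j, D i j = D j i.

Lemma sum_mulmx_sym (x z : 'cV[R]_n) :
  \sum_i x i 0 * (D *m z) i 0 = \sum_i z i 0 * (D *m x) i 0.
Proof.
under eq_bigr do rewrite mxE big_distrr.
under [RHS]eq_bigr do rewrite mxE big_distrr.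
rewrite exchange_big; apply: eq_bigr => i _; apply: eq_bigr => j _ /=.
by rewrite (D_sym j i) mulrCA mulrC mulrA [RHS]mulrC mulrA.
Qed.

Lemma const_mulmx_sym (x z : 'cV[R]_n) r c :
  D *m z = const_mx r -> D *m x = const_mx c ->
  r * \sum_i x i 0 = c * \sum_i z i 0.
Proof.
move=> Dz Dx; have := sum_mulmx_sym x z; rewrite Dz Dx.
under eq_bigr do rewrite mxE mulrC.
under [X in _ = X -> _]eq_bigr do rewrite mxE mulrC.
by rewrite -!big_distrr.
Qed.

Lemma curvature_index_Some (z : 'cV[R]_n) r :
  D *m z = const_mx r -> \sum_i z i 0 = 1 -> curvature_index D (Some r).
Proof.
move=> Dz sum_z; split; [|split].
- have [r0|r_neq0] := eqVneq r 0.
    left => -[w Dw]; have := const_mulmx_sym Dz Dw.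
    by rewrite r0 mul0r sum_z mulr1 => /eqP; rewrite eq_sym oner_eq0.
  right; exists (r^-1 *: z); split.
    by rewrite -scalemxAr Dz; apply/matrixP => i j; rewrite !mxE mulVf.
  under eq_bigr do rewrite mxE.
  by rewrite -big_distrr /= sum_z mulr1 invr_eq0.
- by exists z.
- move=> x s sum_x Dx; have := const_mulmx_sym Dz Dx.
  by rewrite sum_x sum_z !mulr1 => ->.
Qed.

Lemma curvature_index_None (z : 'cV[R]_n) :
  D *m z = const_mx 1 -> \sum_i z i 0 = 0 -> curvature_index D None.
Proof.
move=> Dz sum_z /= [exceptional|[w [Dw /eqP []]]].
  by apply: exceptional; exists z.
by have := const_mulmx_sym Dz Dw; rewrite sum_z mul1r mulr0.
Qed.

End SymmetricCurvature.

Section MultipartiteDistance.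
Variables (k : nat) (a : 'I_k -> nat).
Hypothesis k_ge2 : (2 <= k)%N.
Hypothesis a_gt0 : forall i, (0 < a i)%N.
Notation V := (Kmp_vertex a).
Notation e := (Kmp_rel a).

Definition Kmp_dist (u v : V) : nat :=
  if u == v then 0 else if tag u == tag v then 2 else 1.

Lemma exists_other_part (i : 'I_k) : exists j : 'I_k, j != i.
Proof.
have lt0k : (0 < k)%N by apply: leq_trans k_ge2.
have [i0|i_neq0] := eqVneq (nat_of_ord i) 0%N.
  by exists (Ordinal k_ge2); apply/eqP => /(congr1 val) /=; rewrite i0.
exists (Ordinal lt0k); apply/eqP => /(congr1 val) /= /esym /eqP.
by rewrite (negbTE i_neq0).
Qed.

Lemma gdist_Kmp (u v : V) : gdist e u v = Kmp_dist u v.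
Proof.
rewrite /Kmp_dist; case: (eqVneq u v) => [<-|uv].
  by apply: gdist_shortest => //=; apply: (size_uniq_leq_card (s := [:: u])).
case: (eqVneq (tag u) (tag v)) => [same_part|]; last first.
  move=> euv; apply: gdist_shortest.
  - by rewrite walk1E.
  - by case=> //= _; rewrite uv.
  - by apply: (size_uniq_leq_card (s := [:: u; v])); rewrite /= inE uv.
have [j j_other] := exists_other_part (tag u).
set w : V := Tagged (fun i => 'I_(a i)) (Ordinal (a_gt0 j)).
have euw : e u w by rewrite /e /Kmp_rel /= eq_sym.
have ewv : e w v by rewrite /e /Kmp_rel /= -same_part.
have wu : w != u by apply: contraNneq j_other => <-.
have wv : w != v by apply: contraNneq j_other => wv; rewrite same_part -wv.
apply: gdist_shortest.
- apply/existsP; exists w; rewrite euw; exact: etrans (walk1E _ w v) ewv.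
- case=> [|[|]] //= _; apply/existsP => -[z /andP[euz /eqP zv]].
  by move: euz; rewrite zv /e /Kmp_rel same_part eqxx.
- apply: (size_uniq_leq_card (s := [:: u; v; w])).
  by rewrite /= !inE negb_or uv eq_sym wu eq_sym wv.
Qed.

Lemma Kmp_distE (R : nzRingType) (u v : V) :
  (Kmp_dist u v)%:R = 1 + (tag u == tag v)%:R - 2 * (u == v)%:R :> R.
Proof.
rewrite /Kmp_dist; case: (eqVneq u v) => [<-|uv]; first by rewrite !eqxx mulr1 subrr.
by case: (eqVneq (tag u) (tag v)) => _; rewrite mulr0 subr0 ?addr0.
Qed.

End MultipartiteDistance.

Section MultipartiteMatrix.
Variables (R : realFieldType) (k : nat) (a : 'I_k -> nat).
Hypothesis k_ge2 : (2 <= k)%N.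
Hypothesis a_gt0 : forall i, (0 < a i)%N.
Notation V := (Kmp_vertex a).
Notation D := (distmx (Kmp_rel a) R).

Lemma distmx_KmpE i j : D i j = (Kmp_dist (enum_val i) (enum_val j))%:R.
Proof. by rewrite mxE gdist_Kmp. Qed.

Lemma distmx_Kmp_sym i j : D i j = D j i.
Proof.
by rewrite !distmx_KmpE !Kmp_distE eq_sym [enum_val j == _]eq_sym.
Qed.

Lemma sum_part_const (y : 'I_k -> R) : \sum_(v : V) y (tag v) = \sum_i (a i)%:R * y i.
Proof.
rewrite -(@sig_big_dep R 0 +%R 'I_k (fun i => 'I_(a i)) predT (fun i => predT)
           (fun i _ => y i)) /=.
by apply: eq_bigr => i _; rewrite sumr_const card_ord mulr_natl.
Qed.

Lemma sum_eq_mulr {I : finType} (u : I) (F : I -> R) :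
  \sum_v (u == v)%:R * F v = F u.
Proof.
rewrite (bigD1 u) //= eqxx mul1r big1 ?addr0 // => v /negbTE.
by rewrite eq_sym => ->; rewrite mul0r.
Qed.

Definition part_vec (y : 'I_k -> R) : 'cV[R]_#|V| := \col_j y (tag (enum_val j)).

Lemma sum_part_vec y : \sum_i part_vec y i 0 = \sum_i (a i)%:R * y i.
Proof.
under eq_bigr do rewrite mxE.
by rewrite -(big_enum_val (fun v : V => y (tag v))) sum_part_const.
Qed.

Lemma distmx_part_vec y j : (D *m part_vec y) j 0 =
  \sum_i (a i)%:R * y i + ((a (tag (enum_val j)))%:R - 2) * y (tag (enum_val j)).
Proof.
rewrite mxE; under eq_bigr do rewrite distmx_KmpE mxE.
rewrite -(big_enum_val (fun v => (Kmp_dist (enum_val j) v)%:R * y (tag v))).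
set u := enum_val j.
under eq_bigr do rewrite Kmp_distE !mulrBl mulrDl mul1r -mulrA.
rewrite sumrB big_split -mulr_sumr sum_eq_mulr /= sum_part_const.
rewrite (sum_part_const (fun i => (tag u == i)%:R * y i)).
under [X in _ + X - _ = _]eq_bigr do rewrite mulrCA.
by rewrite sum_eq_mulr; ring.
Qed.

Lemma curvature_index_Kmp :
  curvature_index D
    (if [exists i, a i == 2%N] then Some 1
     else let S := \sum_(i < k) ((a i)%:R / ((a i)%:R - 2) : R) in
          if S == 0 then None else Some (1 + S^-1)).
Proof.
case: ifP => [/existsP[i0 /eqP a_i0]|no_two].
  pose y i : R := (i0 == i)%:R / 2.
  have sum_y : \sum_i (a i)%:R * y i = 1.
    under eq_bigr do rewrite /y mulrCA.
    by rewrite sum_eq_mulr a_i0 mulfV // pnatr_eq0.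
  apply: (curvature_index_Some distmx_Kmp_sym (z := part_vec y)).
    apply/matrixP => j l; rewrite (ord1 l) distmx_part_vec sum_y !mxE /y.
    case: (eqVneq i0 (tag (enum_val j))) => [<-|_].
      by rewrite a_i0 subrr mul0r addr0.
    by rewrite mul0r mulr0 addr0.
  by rewrite sum_part_vec.
have a_neq2 i : (a i)%:R - 2 != 0 :> R.
  rewrite subr_eq0 -[2]/(2%:R : R) eqr_nat; apply: contraFN no_two => /eqP ai2.
  by apply/existsP; exists i; rewrite ai2.
move=> /=; set S := \sum_(i < k) _.
pose y c i : R := c / ((a i)%:R - 2).
have sum_y c : \sum_i (a i)%:R * y c i = c * S.
  by rewrite /S mulr_sumr; apply: eq_bigr => i _; rewrite /y mulrCA mulrA.
have D_y c : D *m part_vec (y c) = const_mx (c * S + c).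
  apply/matrixP => j l; rewrite (ord1 l) distmx_part_vec sum_y !mxE /y.
  by rewrite mulrCA mulfV ?mulr1.
have [S0|S_neq0] := eqVneq S 0.
  apply: (curvature_index_None distmx_Kmp_sym (z := part_vec (y 1))).
    by rewrite D_y S0 mulr0 add0r.
  by rewrite sum_part_vec sum_y S0 mulr0.
apply: (curvature_index_Some distmx_Kmp_sym (z := part_vec (y S^-1))).
  by rewrite D_y mulVf // addrC.
by rewrite sum_part_vec sum_y mulVf.
Qed.

End MultipartiteMatrix.

Lemma K11m_index_sum (R : realFieldType) (m : nat) : (5 <= m)%N ->
  let a := fun i : 'I_3 => nth 0%N [:: 1%N; 1%N; m] i in
  1 + (\sum_(i < 3) ((a i)%:R / ((a i)%:R - 2) : R))^-1 = - 2 / (m%:R - 4)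
  /\ \sum_(i < 3) ((a i)%:R / ((a i)%:R - 2) : R) != 0.
Proof.
move=> m_ge5 a.
have m_neq n : (n < 5)%N -> m%:R - n%:R != 0 :> R.
  by move=> lt_n5; rewrite subr_eq0 eqr_nat; apply: contraTneq m_ge5 => ->; rewrite -ltnNge.
have m_neq2 := m_neq 2%N isT; have m_neq4 := m_neq 4%N isT.
have sum_a : \sum_(i < 3) ((a i)%:R / ((a i)%:R - 2) : R) = (4 - m%:R) / (m%:R - 2).
  by rewrite !big_ord_recr big_ord0 /= /a /=; field.
rewrite sum_a; split.
  by field; rewrite m_neq2 m_neq4 -opprB oppr_eq0 m_neq4.
by rewrite mulf_eq0 invr_eq0 negb_or -opprB oppr_eq0 m_neq4.
Qed.

Theorem theorem4p3 (R : realFieldType) :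
  (forall (k : nat) (a : 'I_k -> nat),
      (2 <= k)%N -> (forall i, (1 <= a i)%N) ->
      curvature_index (distmx (Kmp_rel a) R)
        (if [exists i, a i == 2%N] then Some 1
         else let S := \sum_(i < k) ((a i)%:R / ((a i)%:R - 2) : R) in
              if S == 0 then None else Some (1 + S^-1)))
  /\
  (forall m : nat, (5 <= m)%N ->
      curvature_index
        (distmx (Kmp_rel (fun i : 'I_3 => nth 0%N [:: 1%N; 1%N; m] i)) R)
        (Some (- 2 / (m%:R - 4)))).
Proof.
split=> [k a k_ge2 a_gt0|m m_ge5]; first exact: curvature_index_Kmp.
set a := (fun i : 'I_3 => _).
have a_gt0 : forall i, (0 < a i)%N by case=> -[|[|[|n]]] lt_n3 //=; apply: leq_trans m_ge5.
have no_two : [exists i, a i == 2%N] = false.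
  by apply/existsP => -[[[|[|[|n]]] lt_n3]] //; rewrite /a /= => /eqP m2; rewrite m2 in m_ge5.
have [index_eq S_neq0] := K11m_index_sum R m_ge5.
have := curvature_index_Kmp R (a := a) isT a_gt0.
by rewrite no_two /= (negbTE S_neq0) index_eq.
Qed.
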